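(* Let $N \ge 2$ and consider $N$ electrons with positions $r = (r_1,\dots,r_N) \in \mathbb{R}^{3N}$, $r_i \in \mathbb{R}^3$, each carrying a fixed spin label $\rho_i \in \{\uparrow,\downarrow\}$. For a transposition $\tau$ of two indices $i \neq j$ with $\rho_i = \rho_j$, write $\tau r$ for the configuration obtained from $r$ by exchanging $r_i$ and $r_j$. Let $K \ge 1$, let $\gamma_1,\dots,\gamma_K \in \mathbb{R}$, let $\beta_1,\beta_2 \in \mathbb{R}\setminus\{0\}$, and let $\alpha^{(1)},\dots,\alpha^{(K)} : \mathbb{R}^{3N} \to \mathbb{R}^N$ be maps that are equivariant under exchange of same-spin electrons, i.e. for every transposition $\tau$ of two same-spin indices $i,j$ and every $r$, the vector $\alpha^{(k)}(\tau r)$ is obtained from $\alpha^{(k)}(r)$ by swapping its $i$-th and $j$-th entries. Define the Sortlet ansatz $$\Psi(r) = \exp[J_\beta(r)] \sum_{k=1}^K \Psi_{\alpha^{(k)}}(r)\, e^{-\gamma_k \sum_{j=1}^N |r_j|},$$ where $$J_\beta(r) = \sum_{i<j,\ \rho_i = \rho_j} \frac{-1}{4}\,\frac{\beta_1}{\beta_1^2 + |r_i - r_j|} + \sum_{i<j,\ \rho_i \ne \rho_j} \frac{-1}{2}\,\frac{\beta_2}{\beta_2^2 + |r_i - r_j|}$$ and $\Psi_\alpha$ denotes the sortlet defined in the context. Then $\Psi$ is antisymmetric under exchange of any two electrons with the same spin: $\Psi(\tau r) = -\Psi(r)$ for every $r \in \mathbb{R}^{3N}$ and every transposition $\tau$ of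 two same-spin indices.
   Context: Sortlet: for a map $\alpha = (\alpha_1,\dots,\alpha_N) : \mathbb{R}^{3N} \to \mathbb{R}^N$ and a configuration $r$ at which the values $\alpha_1(r),\dots,\alpha_N(r)$ are pairwise distinct, let $\pi_\alpha = \pi_{\alpha(r)}$ be the unique permutation of $\{1,\dots,N\}$ with $\alpha_{\pi_\alpha(1)}(r) < \alpha_{\pi_\alpha(2)}(r) < \dots < \alpha_{\pi_\alpha(N)}(r)$ (the permutation that sorts $\alpha(r)$), and set $$\Psi_\alpha(r) = \sigma(\pi_\alpha) \prod_{i=1}^{N-1} \big(\alpha_{\pi_\alpha(i+1)}(r) - \alpha_{\pi_\alpha(i)}(r)\big),$$ where $\sigma(\pi) \in \{+1,-1\}$ is the sign (parity) of the permutation $\pi$. At configurations where two values $\alpha_i(r)$ coincide, the product of consecutive sorted differences vanishes, and $\Psi_\alpha(r) = 0$. $|\cdot|$ denotes the Euclidean norm on $\mathbb{R}^3$. *)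

From mathcomp Require Import all_boot all_order all_algebra all_fingroup.
From mathcomp Require Import all_classical all_reals all_analysis.
Set Implicit Arguments. Unset Strict Implicit. Unset Printing Implicit Defensive.
Import Order.TTheory GRing.Theory Num.Theory.
Local Open Scope ring_scope.

Definition point (R : realType) := 'I_3 -> R.
Definition config (R : realType) (N : nat) := 'I_N -> point R.

Definition dist3 (R : realType) (x y : point R) : R :=
  Num.sqrt (\sum_(k < 3) (x k - y k) ^+ 2).

Definition sort_perm (R : realType) (N : nat) (a : 'I_N -> R) : option 'S_N :=
  [pick s : 'S_N | [forall i : 'I_N, forall j : 'I_N,
                      (i < j)%N ==> (a (s i) < a (s j))]].

(* Sortlet Psi_alpha evaluated at the value vector a = alpha(r);
   zero when two values coincide (no strictly sorting permutation exists). *)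
Definition sortlet_val (R : realType) (N : nat) (a : 'I_N -> R) : R :=
  match sort_perm a with
  | Some s =>
      let b := fun n : nat =>
        if @insub nat (fun m => (m < N)%N) 'I_N n is Some k then a (s k) else 0 in
      (-1) ^+ (odd_perm s) * \prod_(0 <= i < N.-1) (b i.+1 - b i)
  | None => 0
  end.

Definition sortlet (R : realType) (N : nat)
  (alpha : config R N -> ('I_N -> R)) (r : config R N) : R :=
  sortlet_val (alpha r).

Definition swap_config (R : realType) (N : nat) (i j : 'I_N) (r : config R N)
  : config R N := fun k => r (tperm i j k).

(* Jastrow factor J_beta. rho : spin labels (true = up, false = down). *)
Definition jastrow (R : realType) (N : nat) (rho : 'I_N -> bool)
  (beta1 beta2 : R) (r : config R N) : R :=
  \sum_(i < N) \sum_(j < N | (i < j)%N && (rho i == rho j))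
      (- (1 / 4) * (beta1 / (beta1 ^+ 2 + dist3 (r i) (r j))))
  + \sum_(i < N) \sum_(j < N | (i < j)%N && (rho i != rho j))
      (- (1 / 2) * (beta2 / (beta2 ^+ 2 + dist3 (r i) (r j)))).

Definition norm3 (R : realType) (x : point R) : R :=
  Num.sqrt (\sum_(k < 3) (x k) ^+ 2).

Definition sortlet_ansatz (R : realType) (N K : nat) (rho : 'I_N -> bool)
  (beta1 beta2 : R) (gamma : 'I_K -> R)
  (alpha : 'I_K -> config R N -> ('I_N -> R)) (r : config R N) : R :=
  expR (jastrow rho beta1 beta2 r) *
  \sum_(k < K) (sortlet (alpha k) r * expR (- gamma k * \sum_(j < N) norm3 (r j))).

From mathcomp Require Import all_boot all_order all_algebra all_fingroup.
From mathcomp Require Import all_classical all_reals all_analysis.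
Import Order.TTheory GRing.Theory Num.Theory.
Local Open Scope ring_scope.

(* The Jastrow factor and the exponential envelope are invariant under every
   spin-preserving permutation t of the electrons, while the sortlet of an
   equivariant alpha picks up the sign of t: if s sorts alpha(r), then s t^-1
   sorts alpha(t r) and produces the same sorted values.  A transposition of two
   same-spin electrons is odd. *)

Lemma homo_ltn_perm1 (n : nat) (h : 'S_n) :
  {homo h : i j / (i < j)%N} -> h = 1%g.
Proof.
move=> h_incr.
have sorted_enum : sorted (fun i j : 'I_n => (i < j)%N) (enum 'I_n).
  by have := iota_ltn_sorted 0 n; rewrite -val_enum_ord sorted_map.
have /eq_in_map h_id : map h (enum 'I_n) = map id (enum 'I_n).
  rewrite map_id; apply: (@irr_sorted_eq _ (fun i j : 'I_n => (i < j)%N)).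
  - by move=> ? ? ?; apply: ltn_trans.
  - by move=> i; apply: ltnn.
  - exact: (@homo_sorted _ _ (fun i => h i) _ _ h_incr _ sorted_enum).
  - exact: sorted_enum.
  - move=> i; rewrite mem_enum; apply/mapP.
    by exists ((h^-1)%g i); rewrite ?mem_enum ?permKV.
by apply/permP => i; rewrite perm1 h_id ?mem_enum.
Qed.

Definition sorts {R : numDomainType} {n : nat} (a : 'I_n -> R) (s : 'S_n) :=
  [forall i : 'I_n, forall j : 'I_n, (i < j)%N ==> (a (s i) < a (s j))].

Lemma sortsP (R : numDomainType) (n : nat) (a : 'I_n -> R) (s : 'S_n) :
  reflect (forall i j : 'I_n, (i < j)%N -> a (s i) < a (s j)) (sorts a s).
Proof.
apply: (iffP forallP) => [sorted_s i j | sorted_s i].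
  by move/forallP: (sorted_s i) => /(_ j) /implyP.
by apply/forallP => j; apply/implyP; apply: sorted_s.
Qed.

Lemma sorts_uniq (R : numDomainType) (n : nat) (a : 'I_n -> R) (s1 s2 : 'S_n) :
  sorts a s1 -> sorts a s2 -> s1 = s2.
Proof.
move=> /sortsP sorted1 /sortsP sorted2.
suff /eqP : (s2 * s1^-1)%g = 1%g by rewrite -eq_mulgV1 eq_sym => /eqP.
have s1K m : s1 ((s2 * s1^-1)%g m) = s2 m by rewrite permM permKV.
apply: homo_ltn_perm1 => k l lt_kl.
rewrite ltnNge leq_eqVlt negb_or; apply/andP; split.
  by apply: contraTneq lt_kl => /val_inj /perm_inj ->; rewrite ltnn.
by apply/negP => /sorted1; rewrite !s1K lt_gtF ?sorted2.
Qed.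

Lemma sorts_perm (R : numDomainType) (n : nat) (a : 'I_n -> R) (t s : 'S_n) :
  sorts (fun m => a (t m)) s = sorts a (s * t)%g.
Proof. by apply: eq_forallb => i; apply: eq_forallb => j; rewrite !permM. Qed.

Lemma sort_permE (R : realType) (n : nat) (a : 'I_n -> R) :
  sort_perm a = [pick s | sorts a s].
Proof. by []. Qed.

Lemma sort_perm_perm (R : realType) (n : nat) (a : 'I_n -> R) (t : 'S_n) :
  sort_perm (fun m => a (t m)) = omap (fun s => s * t^-1)%g (sort_perm a).
Proof.
rewrite !sort_permE.
case: pickP => [s' sorted_s' | unsorted']; case: pickP => [s sorted_s | unsorted] //=.
- by rewrite (@sorts_uniq _ _ a s (s' * t)%g) ?mulgK -?sorts_perm.
- by have := unsorted (s' * t)%g; rewrite -sorts_perm sorted_s'.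
- by have := unsorted' (s * t^-1)%g; rewrite sorts_perm mulgKV sorted_s.
Qed.

Lemma sortlet_val_perm (R : realType) (n : nat) (a : 'I_n -> R) (t : 'S_n) :
  sortlet_val (fun m => a (t m)) = (-1) ^+ t * sortlet_val a.
Proof.
rewrite /sortlet_val sort_perm_perm; case: sort_perm => [s|] /=; last by rewrite mulr0.
rewrite odd_permM odd_permV signr_addb -mulrA mulrCA; congr (_ * (_ * _)).
by apply: eq_bigr => i _; congr (_ - _); case: insub => // k; rewrite permM permKV.
Qed.

Lemma sum_lt_pairsE (R : nmodType) (n : nat) (F : 'I_n -> 'I_n -> R) :
  (forall i j, F i j = F j i) ->
  (\sum_(i < n) \sum_(j < n | (i < j)%N) F i j) *+ 2
  = \sum_(i < n) \sum_(j < n | i != j) F i j.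
Proof.
move=> FC.
have mkcond (P : rel 'I_n) : \sum_(i < n) \sum_(j < n | P i j) F i j
    = \sum_(i < n) \sum_(j < n) (if P i j then F i j else 0).
  by apply: eq_bigr => i _; rewrite big_mkcond.
rewrite mulr2n (mkcond (fun i j => i < j)%N) (mkcond (fun i j => i != j)).
rewrite {2}exchange_big -big_split; apply: eq_bigr => i _.
rewrite -big_split; apply: eq_bigr => j _ /=.
by rewrite FC -(inj_eq val_inj); case: ltngtP; rewrite ?addr0 ?add0r.
Qed.

Lemma sum_lt_pairs_perm (R : numDomainType) (n : nat) (t : 'S_n)
    (P : rel 'I_n) (F : 'I_n -> 'I_n -> R) :
  (forall i j, P i j = P j i) -> (forall i j, F i j = F j i) ->
  (forall i j, P (t i) (t j) = P i j) ->
  \sum_(i < n) \sum_(j < n | (i < j)%N && P i j) F (t i) (t j)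
  = \sum_(i < n) \sum_(j < n | (i < j)%N && P i j) F i j.
Proof.
move=> PC FC Pt; pose G i j := if P i j then F i j else 0.
have GC i j : G i j = G j i by rewrite /G PC FC.
transitivity (\sum_(i < n) \sum_(j < n | (i < j)%N) G (t i) (t j)).
  by apply: eq_bigr => i _; rewrite big_mkcondr; apply: eq_bigr => j _; rewrite /G Pt.
transitivity (\sum_(i < n) \sum_(j < n | (i < j)%N) G i j); last first.
  by apply: eq_bigr => i _; rewrite big_mkcondr.
(* Doubled, both sides become sums over all ordered pairs i != j, which t permutes. *)
apply/eqP; rewrite -(orFb (_ == _)) -(eqrMn2r 2) !sum_lt_pairsE //; apply/eqP.
rewrite [RHS](reindex_inj (@perm_inj _ t)); apply: eq_bigr => i _.
rewrite [RHS](reindex_inj (@perm_inj _ t)); apply: eq_bigl => j.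
by rewrite (inj_eq perm_inj).
Qed.

Lemma dist3C (R : realType) (x y : 'I_3 -> R) : dist3 x y = dist3 y x.
Proof. by congr Num.sqrt; apply: eq_bigr => k _; rewrite -sqrrN opprB. Qed.

Lemma jastrow_perm (R : realType) (N : nat) (rho : 'I_N -> bool)
    (beta1 beta2 : R) (t : 'S_N) (r : config R N) :
  (forall m, rho (t m) = rho m) ->
  jastrow rho beta1 beta2 (fun m => r (t m)) = jastrow rho beta1 beta2 r.
Proof.
move=> rho_t; rewrite /jastrow.
have rho_tt i j : (rho (t i) == rho (t j)) = (rho i == rho j) by rewrite !rho_t.
rewrite (@sum_lt_pairs_perm _ _ t (fun i j => rho i == rho j)
  (fun i j => - (1 / 4) * (beta1 / (beta1 ^+ 2 + dist3 (r i) (r j))))).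
rewrite (@sum_lt_pairs_perm _ _ t (fun i j => rho i != rho j)
  (fun i j => - (1 / 2) * (beta2 / (beta2 ^+ 2 + dist3 (r i) (r j))))) //.
all: by move=> i j; rewrite 1?dist3C 1?rho_tt // eq_sym.
Qed.

Lemma sortlet_ansatz_perm (R : realType) (N K : nat) (rho : 'I_N -> bool)
    (beta1 beta2 : R) (gamma : 'I_K -> R)
    (alpha : 'I_K -> config R N -> ('I_N -> R)) (t : 'S_N) (r : config R N) :
  (forall m, rho (t m) = rho m) ->
  (forall k, alpha k (fun m => r (t m)) = (fun m => alpha k r (t m))) ->
  sortlet_ansatz rho beta1 beta2 gamma alpha (fun m => r (t m))
  = (-1) ^+ t * sortlet_ansatz rho beta1 beta2 gamma alpha r.
Proof.
move=> rho_t alpha_t.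
rewrite /sortlet_ansatz jastrow_perm // [RHS]mulrCA; congr (_ * _).
rewrite mulr_sumr [\sum_(j < N) norm3 (r j)](reindex_inj (@perm_inj _ t)) /=.
by apply: eq_bigr => k _; rewrite /sortlet alpha_t sortlet_val_perm mulrA.
Qed.

Theorem mainTheorem1 (R : realType) (N K : nat) (rho : 'I_N -> bool)
  (gamma : 'I_K -> R) (beta1 beta2 : R)
  (alpha : 'I_K -> config R N -> ('I_N -> R)) :
  (2 <= N)%N -> (1 <= K)%N -> beta1 != 0 -> beta2 != 0 ->
  (forall (k : 'I_K) (i j : 'I_N), i != j -> rho i = rho j ->
     forall r : config R N,
       alpha k (swap_config i j r) = (fun m => alpha k r (tperm i j m))) ->
  forall (i j : 'I_N), i != j -> rho i = rho j ->
  forall r : config R N,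
    sortlet_ansatz rho beta1 beta2 gamma alpha (swap_config i j r)
    = - sortlet_ansatz rho beta1 beta2 gamma alpha r.
Proof.
move=> _ _ _ _ alpha_swap i j neq_ij rho_ij r.
have rho_swap m : rho (tperm i j m) = rho m by case: tpermP => // ->.
rewrite /swap_config sortlet_ansatz_perm // => [|k].
  by rewrite odd_tperm neq_ij expr1 mulN1r.
exact: alpha_swap.
Qed.
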